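(* Let $\phi$ be the real root of $x^3=x^2+x+1$ and let $\phi_1$ be one of its two non-real roots. Define \[\psi_1=\frac{\phi_1^3+\phi_1^2}{\phi_1^2+2\phi_1+3},\qquad \zeta_1=\frac{\phi_1^3}{\phi_1^2+2\phi_1+3}.\] For integers $k,l$ put \[\alpha=\frac{k\phi^2+(k+l)\phi^3}{\phi^2+2\phi+3},\qquad \beta=\left|2(k\psi_1+l\zeta_1)\right|.\] Then for all integers $k,l$, $|\alpha|\le |k|+|l|$ and $\beta\ge \frac{|k|+|l|}{31}$.
   Context: The value of $\beta$ does not depend on which of the two complex-conjugate non-real roots is chosen as $\phi_1$. *)

From mathcomp Require Import all_boot all_order all_algebra all_field.
Set Implicit Arguments. Unset Strict Implicit. Unset Printing Implicit Defensive.
Import Order.TTheory GRing.Theory Num.Theory.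
Local Open Scope ring_scope.

(* The complex numbers are modelled by algC (algebraic complex numbers);
   all quantities in the statement are algebraic. *)

Definition trib_root (x : algC) : Prop := x ^+ 3 = x ^+ 2 + x + 1.

Definition psi1 (p1 : algC) : algC := (p1 ^+ 3 + p1 ^+ 2) / (p1 ^+ 2 + 2 * p1 + 3).
Definition zeta1 (p1 : algC) : algC := p1 ^+ 3 / (p1 ^+ 2 + 2 * p1 + 3).

Definition alpha (p : algC) (k l : int) : algC :=
  (k%:~R * p ^+ 2 + (k + l)%:~R * p ^+ 3) / (p ^+ 2 + 2 * p + 3).

Definition beta (p1 : algC) (k l : int) : algC :=
  `|2 * (k%:~R * psi1 p1 + l%:~R * zeta1 p1)|.

From mathcomp Require Import all_boot all_order all_algebra all_field.
From mathcomp Require Import ring lra.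
Set Implicit Arguments. Unset Strict Implicit. Unset Printing Implicit Defensive.
Import Order.TTheory GRing.Theory Num.Theory.
Local Open Scope ring_scope.

(* The real root satisfies 1.83 < phi < 1.84.  Then alpha = k a + l b with
   weights a, b in [0, 1].  For beta, Vieta's formulas give
   phi1 + phi1^* = 1 - phi and |phi1|^2 = phi^2 - phi - 1 (= 1/phi), which
   lies in [1/2, 1].  Since k psi1 + l zeta1 = phi1^2 ((k + l) phi1 + k) / D
   with D = phi1^2 + 2 phi1 + 3, and |(k + l) phi1 + k|^2 is a
   positive-definite quadratic form in (k, l) that is at least
   ((|k| + |l|) / 4)^2, while 0 < |D| <= 6, we get
   beta >= 2 (1/2) ((|k| + |l|) / 4) / 6 = (|k| + |l|) / 24. *)

Section RealTribonacciRoot.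
Variables (R : realFieldType) (F : R).
Hypothesis F_root : F ^+ 3 = F ^+ 2 + F + 1.

Lemma trib_root_sub_mul (a : R) :
  (F - a) * (F ^+ 2 + (a - 1) * F + (a ^+ 2 - a - 1)) = a ^+ 2 + a + 1 - a ^+ 3.
Proof.
by transitivity (F ^+ 3 - (F ^+ 2 + F + 1) + (a ^+ 2 + a + 1 - a ^+ 3));
  [ring | rewrite F_root subrr add0r].
Qed.

Lemma trib_quot_gt0 (a : R) : 5 / 3 < a -> 0 < F ^+ 2 + (a - 1) * F + (a ^+ 2 - a - 1).
Proof. by move=> a_gt; have := sqr_ge0 (F + (a - 1) / 2); nra. Qed.

Lemma trib_root_gtE (a : R) : 5 / 3 < a -> (a < F) = (a ^+ 3 < a ^+ 2 + a + 1).
Proof.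
move=> /trib_quot_gt0 q_gt0.
by rewrite -subr_gt0 -(pmulr_lgt0 _ q_gt0) trib_root_sub_mul subr_gt0.
Qed.

Lemma trib_root_ltE (a : R) : 5 / 3 < a -> (F < a) = (a ^+ 2 + a + 1 < a ^+ 3).
Proof.
move=> /trib_quot_gt0 q_gt0.
by rewrite -subr_lt0 -(pmulr_llt0 _ q_gt0) trib_root_sub_mul subr_lt0.
Qed.

Lemma trib_real_root_bounds : 183 / 100 < F < 184 / 100.
Proof. by rewrite trib_root_gtE ?trib_root_ltE //; lra. Qed.

Lemma trib_alpha_weights_le1 :
  `|(F ^+ 2 + F ^+ 3) / (F ^+ 2 + 2 * F + 3)| <= 1 /\ `|F ^+ 3 / (F ^+ 2 + 2 * F + 3)| <= 1.
Proof.
have /andP[F_gt F_lt] := trib_real_root_bounds.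
have F_gt0 : 0 < F by lra.
have D_gt0 : 0 < F ^+ 2 + 2 * F + 3 by nra.
rewrite !normf_div !(gtr0_norm D_gt0) !ler_pdivrMr // !mul1r !gtr0_norm ?addr_gt0 ?exprn_gt0 //.
by split; nra.
Qed.

(* With phi1 a non-real root, [F ^+ 2 - F - 1] and [1 - F] are the values of
   phi1 * phi1^* and phi1 + phi1^*. *)
Lemma trib_conj_norm_bounds : 1 / 2 <= F ^+ 2 - F - 1 <= 1.
Proof. by have /andP[F_gt F_lt] := trib_real_root_bounds; apply/andP; split; nra. Qed.

Lemma trib_conj_form_lower_bound (K L : R) :
  ((`|K| + `|L|) / 4) ^+ 2 <= (K + L) ^+ 2 * (F ^+ 2 - F - 1) + (K + L) * K * (1 - F) + K ^+ 2.
Proof.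
have /andP[F_gt F_lt] := trib_real_root_bounds.
have normKL : (`|K| + `|L|) ^+ 2 <= 2 * (K ^+ 2 + L ^+ 2).
  rewrite -(real_normK (num_real K)) -(real_normK (num_real L)).
  by have := sqr_ge0 (`|K| - `|L|); nra.
have cross : 0 <= (2 * F ^+ 2 - 3 * F - 1) * (K + L) ^+ 2.
  by apply: mulr_ge0; [nra | exact: sqr_ge0].
have K2_ge0 := sqr_ge0 K; have L2_ge0 := sqr_ge0 L.
nra.
Qed.

End RealTribonacciRoot.

Lemma ler_norm_combination (R : numDomainType) (x y a b : R) :
  `|a| <= 1 -> `|b| <= 1 -> `|x * a + y * b| <= `|x| + `|y|.
Proof.
move=> a_le1 b_le1; apply: le_trans (ler_normD _ _) _.
by rewrite !normrM lerD // ler_piMr.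
Qed.

Lemma norm_trib_den_le (R : numDomainType) (z : R) : `|z| <= 1 -> `|z ^+ 2 + 2 * z + 3| <= 6.
Proof.
move=> z_le1; have z_ge0 := normr_ge0 z.
have z2_le1 : `|z| ^+ 2 <= 1 by rewrite exprn_ile1.
have z_le2 : `|2 * z| <= 2 by rewrite normrM ger0_norm // ler_piMr.
apply: le_trans (ler_normD _ _) _; rewrite (ger0_norm (ler0n _ 3)).
apply: le_trans (lerD (ler_normD _ _) (lexx _)) _.
rewrite normrX; apply: le_trans (lerD (lerD z2_le1 z_le2) (lexx 3)) _.
by have -> : 1 + 2 + 3 = 6 :> R by ring.
Qed.

Section TribonacciRoots.
Variable R : numDomainType.
Implicit Types x y : R.

Lemma trib_roots_sym x y : x != y -> x ^+ 3 = x ^+ 2 + x + 1 -> y ^+ 3 = y ^+ 2 + y + 1 ->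
  x ^+ 2 + x * y + y ^+ 2 = x + y + 1.
Proof.
move=> xy x_root y_root.
have : (x - y) * (x ^+ 2 + x * y + y ^+ 2 - (x + y + 1)) = 0.
  transitivity ((x ^+ 3 - (x ^+ 2 + x + 1)) - (y ^+ 3 - (y ^+ 2 + y + 1))); first ring.
  by rewrite x_root y_root !subrr.
by move/eqP; rewrite mulf_eq0 !subr_eq0 (negPf xy) => /eqP.
Qed.

Lemma trib_den_neq0 x : x ^+ 3 = x ^+ 2 + x + 1 -> x ^+ 2 + 2 * x + 3 != 0.
Proof.
move=> x_root; apply/eqP => den0.
have : 22 = 0 :> R.
  transitivity ((x ^+ 2 - 5 * x + 8) * (x ^+ 2 + 2 * x + 3)
                - (x - 2) * (x ^+ 3 - (x ^+ 2 + x + 1))); first ring.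
  by rewrite den0 x_root subrr !mulr0 subr0.
by move/eqP; rewrite pnatr_eq0.
Qed.

End TribonacciRoots.

Lemma normCK_linear (C : numClosedFieldType) (a b z : C) :
  a \is Num.real -> b \is Num.real ->
  `|a * z + b| ^+ 2 = a ^+ 2 * (z * z^*) + a * b * (z + z^*) + b ^+ 2.
Proof.
by move=> aR bR; rewrite normCK rmorphD rmorphM /= (conj_Creal aR) (conj_Creal bR); ring.
Qed.

Section ConjugateTribonacciRoots.
Variables (C : numClosedFieldType) (phi z : C).
Hypotheses (phi_root : phi ^+ 3 = phi ^+ 2 + phi + 1) (phi_real : phi \is Num.real).
Hypotheses (z_root : z ^+ 3 = z ^+ 2 + z + 1) (z_nonreal : z \isn't Num.real).

Let conj_root : z^* ^+ 3 = z^* ^+ 2 + z^* + 1.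
Proof. by rewrite -rmorphXn z_root !rmorphD rmorphXn rmorph1. Qed.

Let conj_nonreal : z^* \isn't Num.real.
Proof. by rewrite CrealE conjCK eq_sym -CrealE. Qed.

Let z_neq_conj : z != z^*.
Proof. by apply: contraNneq z_nonreal => zw; rewrite CrealE -zw. Qed.

Lemma trib_conj_add : z + z^* = 1 - phi.
Proof.
have phi_z : phi != z by apply: contraNneq z_nonreal => <-.
have phi_w : phi != z^* by apply: contraNneq conj_nonreal => <-.
have : (z - z^*) * (z + z^* - (1 - phi)) = 0.
  transitivity ((phi ^+ 2 + phi * z + z ^+ 2 - (phi + z + 1))
                - (phi ^+ 2 + phi * z^* + z^* ^+ 2 - (phi + z^* + 1))); first ring.
  by rewrite !trib_roots_sym // !subrr.
by move/eqP; rewrite mulf_eq0 !subr_eq0 (negPf z_neq_conj) => /eqP.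
Qed.

Lemma trib_conj_mul : z * z^* = phi ^+ 2 - phi - 1.
Proof.
transitivity ((z + z^*) ^+ 2 - (z + z^*) - 1
              - (z ^+ 2 + z * z^* + z^* ^+ 2 - (z + z^* + 1))); first ring.
by rewrite trib_roots_sym // subrr subr0 trib_conj_add; ring.
Qed.

End ConjugateTribonacciRoots.

Lemma alphaE (p : algC) (k l : int) :
  alpha p k l = k%:~R * ((p ^+ 2 + p ^+ 3) / (p ^+ 2 + 2 * p + 3))
              + l%:~R * (p ^+ 3 / (p ^+ 2 + 2 * p + 3)).
Proof. by rewrite /alpha intrD; ring. Qed.

Lemma betaE (z : algC) (k l : int) :
  beta z k l = 2 * (`|z| ^+ 2 * `|(k + l)%:~R * z + k%:~R| / `|z ^+ 2 + 2 * z + 3|).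
Proof.
rewrite /beta /psi1 /zeta1 normrM (ger0_norm (ler0n _ 2)) -normrX -normrM -normf_div.
by congr (_ * `|_|); rewrite intrD; ring.
Qed.

(* The real-field lemmas are applied in [algR] to [in_algR] lifts of real
   algebraic numbers; their conclusions are convertible to statements in
   [algC]. *)
Lemma norm_alpha_le (phi : algC) (k l : int) : trib_root phi -> phi \is Num.real ->
  `|alpha phi k l| <= (`|k| + `|l|)%:~R.
Proof.
move=> phi_root phi_real; pose F := in_algR phi_real.
have F_root : F ^+ 3 = F ^+ 2 + F + 1 by apply: val_inj.
have [a_le1 b_le1] := trib_alpha_weights_le1 F_root.
by rewrite alphaE intrD !intr_norm ler_norm_combination.
Qed.

Lemma beta_ge (phi z : algC) (k l : int) : trib_root phi -> phi \is Num.real ->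
  trib_root z -> z \isn't Num.real -> (`|k| + `|l|)%:~R / 24 <= beta z k l.
Proof.
move=> phi_root phi_real z_root z_nonreal; pose F := in_algR phi_real.
have F_root : F ^+ 3 = F ^+ 2 + F + 1 by apply: val_inj.
have conj_add := trib_conj_add phi_root phi_real z_root z_nonreal.
have conj_mul := trib_conj_mul phi_root phi_real z_root z_nonreal.
have /andP[z2_ge z2_le1] : 1 / 2 <= `|z| ^+ 2 <= 1.
  by rewrite normCK conj_mul; exact: (trib_conj_norm_bounds F_root).
have z_le1 : `|z| <= 1 by rewrite -(ler_sqr (normr_ge0 z)) ?nnegrE // expr1n.
set A : algC := (`|k| + `|l|)%:~R.
have A_ge0 : 0 <= A by rewrite ler0z addr_ge0.
have N_ge : A / 4 <= `|(k + l)%:~R * z + k%:~R|.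
  rewrite -ler_sqr ?nnegrE ?divr_ge0 // normCK_linear ?realz //.
  rewrite conj_add conj_mul /A !intrD !intr_norm.
  exact: (trib_conj_form_lower_bound F_root (in_algR (realz _ k)) (in_algR (realz _ l))).
have D_gt0 : 0 < `|z ^+ 2 + 2 * z + 3| by rewrite normr_gt0 trib_den_neq0.
have D_le6 : `|z ^+ 2 + 2 * z + 3| <= 6 := norm_trib_den_le z_le1.
rewrite betaE mulrA ler_pdivlMr //.
apply: le_trans (_ : A / 24 * 6 <= _); first by rewrite ler_wpM2l ?divr_ge0.
have -> : A / 24 * 6 = 2 * (1 / 2 * (A / 4)) by field.
by rewrite ler_wpM2l // ler_pM ?divr_ge0.
Qed.

Theorem lemma2 (phi phi1 : algC) :
  trib_root phi -> phi \is Num.real ->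
  trib_root phi1 -> phi1 \isn't Num.real ->
  forall k l : int,
    `|alpha phi k l| <= (`|k| + `|l|)%:~R /\
    beta phi1 k l >= (`|k| + `|l|)%:~R / 31.
Proof.
move=> phi_root phi_real z_root z_nonreal k l; split; first exact: norm_alpha_le.
apply: le_trans (beta_ge k l phi_root phi_real z_root z_nonreal).
by rewrite ler_wpM2l ?ler0z ?addr_ge0 // lef_pV2 ?ler_nat ?posrE.
Qed.
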